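(* Let $m,n\ge0$, $0\le k\le\min(m,n)$, and let $i,j$ be integers with $0\le i\le m$, $0\le j\le n$, $k\le i+j\le m+n-k$. Put $m'=n-k+i$, $n'=m-k+j$, $k'=i+j-k$. Then $$\binom{m+n-k}{m-k,\ n-k,\ k}\,c_{m',n',k'}(i,j)=(-1)^i\binom{m+n-k}{m-i,\ n-j,\ k'}\,c_{m,n,k}(i,j).$$
   Context: Multinomial coefficients: $\binom{a+b+c}{a,\ b,\ c}=\frac{(a+b+c)!}{a!\,b!\,c!}$ for nonnegative $a,b,c$. Let $e,f,h$ be the standard basis of $\mathfrak{sl}(2,\mathbb{C})$. $V(n)$ is the irreducible representation of highest weight $n$ with fixed highest weight vector $\phi_n$; $\{f^i\phi_n\}_{0\le i\le n}$ is a basis, $f^{n+1}\phi_n=0$. $\mathfrak{sl}(2)$ acts on $V(m)\otimes V(n)$ by $X(v\otimes w)=Xv\otimes w+v\otimes Xw$. For any $m,n\ge 0$ and $0\le k\le\min(m,n)$, $\phi_{m,n,k}=\sum_{l=0}^{k}(-1)^l\binom{m-l}{k-l}\binom{n-k+l}{l} f^l\phi_m\otimes f^{k-l}\phi_n\in V(m)\otimes V(n)$ (a highest weight vector of weight $m+n-2k$). The coordinates $c_{m,n,k}(i,j)$ are defined by $f^{p-k}\phi_{m,n,k}=\sum_{i+j=p,\,0\le i\le m,\,0\le j\le n} c_{m,n,k}(i,j)\, f^i\phi_m\otimes f^j\phi_n$ for $k\le p\le m+n-k$. *)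

From HB Require Import structures.
From mathcomp Require Import all_boot all_order all_algebra.
Set Implicit Arguments. Unset Strict Implicit. Unset Printing Implicit Defensive.
Import Order.TTheory GRing.Theory Num.Theory.
Local Open Scope ring_scope.

Definition multinom (a b c : nat) : nat :=
  ((a + b + c)`! %/ (a`! * b`! * c`!))%N.

(* An element of V(m) (x) V(n) is represented by its coordinates
   v i j = coefficient of f^i phi_m (x) f^j phi_n  (only 0<=i<=m, 0<=j<=n matter). *)
Definition tvec := nat -> nat -> int.

(* Action of f on V(m) (x) V(n):
   f (f^a phi_m (x) f^b phi_n) = f^(a+1) phi_m (x) f^b phi_n + f^a phi_m (x) f^(b+1) phi_n,
   with f^(m+1) phi_m = 0 and f^(n+1) phi_n = 0. *)
Definition fact_f (m n : nat) (v : tvec) : tvec :=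
  fun i j =>
    if ((i <= m)%N && (j <= n)%N) then
      (if (0 < i)%N then v i.-1 j else 0) + (if (0 < j)%N then v i j.-1 else 0)
    else 0.

(* phi_{m,n,k} = sum_{l=0}^k (-1)^l C(m-l,k-l) C(n-k+l,l) f^l phi_m (x) f^(k-l) phi_n *)
Definition phi_hw (m n k : nat) : tvec :=
  fun i j =>
    if ((i + j == k)%N && (i <= k)%N) then
      (-1) ^+ i * ('C(m - i, k - i) * 'C(n - k + i, i))%:R
    else 0.

(* c_{m,n,k}(i,j): coefficient of f^i phi_m (x) f^j phi_n in f^(i+j-k) phi_{m,n,k}. *)
Definition coordc (m n k i j : nat) : int :=
  iter (i + j - k) (fact_f m n) (phi_hw m n k) i j.

From HB Require Import structures.
From mathcomp Require Import all_boot all_order all_algebra.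
From mathcomp Require Import zify ring.
Import Order.TTheory GRing.Theory Num.Theory.
Local Open Scope ring_scope.

(* Expanding f^(i+j-k) phi_{m,n,k} with Pascal's rule gives the closed form
   c_{m,n,k}(i,j) = sum_l (-1)^l C(m-l,k-l) C(n-k+l,l) C(i+j-k,i-l).
   The substitution l |-> i - l maps the summands for (m',n',k') onto those
   for (m,n,k) with the same support, and the two sides of the theorem then
   agree summand by summand: the sign is (-1)^i (-1)^l (-1)^(i-l) = 1 and the
   remaining factor is a factorial identity. *)

(* Coordinate (i, j) of f^t (f^a phi (x) f^b phi) when neither factor is
   truncated, i.e. in V(oo) (x) V(oo). *)
Definition fpow_coord (t a b i j : nat) : nat :=
  if (a <= i)%N && (i + j == a + b + t)%N then 'C(t, i - a) else 0%N.

Lemma fpow_coordS t a b i j :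
  fpow_coord t.+1 a b i j =
  ((if (0 < i)%N then fpow_coord t a b i.-1 j else 0) +
   (if (0 < j)%N then fpow_coord t a b i j.-1 else 0))%N.
Proof.
rewrite /fpow_coord; case: i => [|i]; case: j => [|j] /=;
  rewrite ?addn0 ?add0n ?addnS ?addSn ?eqSS.
- by case: (a <= 0)%N.
- by rewrite sub0n !bin0.
- case: eqP => [->|_]; rewrite ?andbF // !ifT; [|lia..].
  have -> : ((a + b + t).+1 - a = (b + t).+1)%N by lia.
  by rewrite -addnA addKn binS bin_small ?add0n //; lia.
case: eqP => _; rewrite ?andbF ?addn0 //.
have [ai|ia] := leqP a i; first by rewrite leqW //= subSn // binS addnC.
have [->|?] := eqVneq a i.+1; first by rewrite subnn !bin0.
by have -> : (a <= i.+1)%N = false by lia.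
Qed.

(* Inside the box i <= m, j <= n the truncation of fact_f is never
   triggered: it only reads the coordinates (i-1, j) and (i, j-1). *)
Lemma iter_fact_f_comb m n (v : tvec) K (g : nat -> int) (a b : nat -> nat) :
  (forall i j, v i j = \sum_(l < K) g l * (fpow_coord 0 (a l) (b l) i j)%:R) ->
  forall t i j, (i <= m)%N -> (j <= n)%N ->
  iter t (fact_f m n) v i j = \sum_(l < K) g l * (fpow_coord t (a l) (b l) i j)%:R.
Proof.
move=> v_comb; elim=> [|t IHt] i j im jn; first exact: v_comb.
rewrite iterS {1}/fact_f im jn /=.
under eq_bigr => l _ do rewrite fpow_coordS natrD mulrDr.
rewrite big_split /=; congr (_ + _); case: ifP => ?.
- by rewrite IHt //; lia.
- by rewrite big1 // => l _; rewrite mulr0.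
- by rewrite IHt //; lia.
- by rewrite big1 // => l _; rewrite mulr0.
Qed.

Definition phi_hw_coef (m n k l : nat) : int :=
  (-1) ^+ l * ('C(m - l, k - l) * 'C(n - k + l, l))%:R.

Lemma phi_hw_comb m n k i j :
  phi_hw m n k i j =
  \sum_(l < k.+1) phi_hw_coef m n k l * (fpow_coord 0 l (k - l) i j)%:R.
Proof.
have fpow0 l : (l <= k)%N -> fpow_coord 0 l (k - l) i j = ((i == l) && (j == k - l))%N.
  move=> lk; rewrite /fpow_coord; case: (eqVneq i l) => [->|il] /=.
    by rewrite leqnn subnn bin0 addn0 eqn_add2l.
  case: ifP => // /andP[li _]; rewrite bin0n; apply/eqP; lia.
rewrite /phi_hw; case: ifP => [/andP[/eqP ijk ik]|not_ijk].
- rewrite (bigD1 (Ordinal (ik : i < k.+1)%N)) //= big1 => [|l /eqP il].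
    by rewrite fpow0 // eqxx (_ : j = k - i)%N ?eqxx ?mulr1 ?addr0 //; lia.
  rewrite fpow0 ?(ltn_ord l : l <= k)%N //; case: eqP => [il'|]; rewrite ?mulr0 //.
  by case: il; apply: val_inj.
- rewrite big1 // => l _; rewrite fpow0 ?(ltn_ord l : l <= k)%N //.
  case: (eqVneq i l) => [il|] /=; rewrite ?mulr0 //.
  case: eqP => [jkl|]; rewrite ?mulr0 //.
  by move: not_ijk; rewrite il jkl subnKC ?(ltn_ord l : l <= k)%N // eqxx.
Qed.

Lemma big_ord_supp (R : nmodType) N M (F : nat -> R) :
  (forall l, (minn N M <= l)%N -> F l = 0) ->
  \sum_(l < N) F l = \sum_(l < M) F l.
Proof.
move=> F0; wlog NM : N M F0 / (N <= M)%N => [hwlog|].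
  case: (leqP N M) => [|/ltnW] NM; first exact: hwlog.
  by symmetry; apply: hwlog; rewrite // minnC.
rewrite (big_ord_widen M F NM) big_mkcond; apply: eq_bigr => l _.
by case: ifP => // /negbT; rewrite -leqNgt => Nl; rewrite F0 // (minn_idPl NM).
Qed.

Definition coordc_term (m n k i j l : nat) : int :=
  if (l <= i)%N && (l <= k)%N && (k <= j + l)%N then
    (-1) ^+ l * ('C(m - l, k - l) * 'C(n - k + l, l) * 'C(i + j - k, i - l))%:R
  else 0.

Lemma fpow_coord_phi k i j l : (l <= k)%N -> (k <= i + j)%N ->
  fpow_coord (i + j - k) l (k - l) i j =
  if (l <= i)%N && (k <= j + l)%N then 'C(i + j - k, i - l) else 0%N.
Proof.
move=> lk kij; rewrite /fpow_coord (_ : l + (k - l) + (i + j - k) = i + j)%N; last by lia.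
rewrite eqxx andbT; case: (l <= i)%N => //=.
by case: leqP => // jlk; rewrite bin_small //; lia.
Qed.

Lemma coordcE m n k i j : (i <= m)%N -> (j <= n)%N -> (k <= i + j)%N ->
  coordc m n k i j = \sum_(l < i.+1) coordc_term m n k i j l.
Proof.
move=> im jn kij; rewrite /coordc.
rewrite (@iter_fact_f_comb _ _ _ _ _ id (fun l => k - l)%N (phi_hw_comb m n k)) //.
transitivity (\sum_(l < k.+1) coordc_term m n k i j l).
  apply: eq_bigr => l _; have lk : (l <= k)%N := ltn_ord l.
  rewrite fpow_coord_phi // /coordc_term lk andbT.
  by case: ((l <= i) && (k <= j + l))%N; rewrite ?mulr0 // /phi_hw_coef -mulrA -natrM.
by apply: big_ord_supp => l; rewrite /coordc_term; case: ifP => //; lia.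
Qed.

Lemma natr_fact_neq0 (F : numDomainType) n : (n`!%:R : F) != 0.
Proof. by rewrite pnatr_eq0 -lt0n fact_gt0. Qed.

Lemma natr_bin (F : numFieldType) n m : (m <= n)%N ->
  ('C(n, m)%:R : F) = n`!%:R / (m`!%:R * (n - m)`!%:R).
Proof.
by move=> mn; rewrite -(bin_fact mn) !natrM mulfK // mulf_neq0 ?natr_fact_neq0.
Qed.

Lemma multinom_fact a b c : (multinom a b c * (a`! * b`! * c`!))%N = (a + b + c)`!.
Proof.
have fact_abc : (a + b + c)`! = ('C(a + b + c, a + b) * 'C(a + b, a) * (a`! * b`! * c`!))%N.
  rewrite -{1}(bin_fact (leq_addr c (a + b))) addKn.
  by rewrite -(bin_fact (leq_addr b a)) addKn !mulnA.
by rewrite /multinom divnK // fact_abc dvdn_mull.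
Qed.

Lemma natr_multinom (F : numFieldType) a b c :
  ((multinom a b c)%:R : F) = (a + b + c)`!%:R / (a`!%:R * b`!%:R * c`!%:R).
Proof.
by rewrite -(multinom_fact a b c) !natrM mulfK // !mulf_neq0 ?natr_fact_neq0.
Qed.

(* Both sides equal
   (m+n-k)! (m-l)! (n-k+l)! / ((m-k)! (n-k)! (m-i)! (n-j)! (i-l)! (j+l-k)! (k-l)! l!). *)
Lemma multinom_bin_dual m n k i j l :
  (k <= m)%N -> (k <= n)%N -> (i <= m)%N -> (j <= n)%N ->
  (l <= i)%N -> (l <= k)%N -> (k <= j + l)%N ->
  (multinom (m - k) (n - k) k * ('C(n - k + l, j + l - k) * 'C(m - l, i - l) * 'C(k, l)))%N
  = (multinom (m - i) (n - j) (i + j - k)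
     * ('C(m - l, k - l) * 'C(n - k + l, l) * 'C(i + j - k, i - l)))%N.
Proof.
move=> km kn im jn li lk klj; apply/eqP; rewrite -(eqr_nat rat) !natrM !natr_multinom.
rewrite !natr_bin; [|lia..].
have -> : (m - k + (n - k) + k = m + n - k)%N by lia.
have -> : (m - i + (n - j) + (i + j - k) = m + n - k)%N by lia.
have -> : (n - k + l - (j + l - k) = n - j)%N by lia.
have -> : (m - l - (i - l) = m - i)%N by lia.
have -> : (m - l - (k - l) = m - k)%N by lia.
have -> : (n - k + l - l = n - k)%N by lia.
have -> : (i + j - k - (i - l) = j + l - k)%N by lia.
by apply/eqP; field; rewrite !natr_fact_neq0.
Qed.

Lemma coordc_term_dual m n k i j l :
  (k <= m)%N -> (k <= n)%N -> (i <= m)%N -> (j <= n)%N -> (k <= i + j)%N -> (l <= i)%N ->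
  (multinom (m - k) (n - k) k)%:Z * coordc_term (n - k + i) (m - k + j) (i + j - k) i j (i - l)
  = (-1) ^+ i * (multinom (m - i) (n - j) (i + j - k))%:Z * coordc_term m n k i j l.
Proof.
move=> km kn im jn kij li; rewrite /coordc_term.
have -> : (i - l <= i)%N && (i - l <= i + j - k)%N && (i + j - k <= j + (i - l))%N
          = (l <= i)%N && (l <= k)%N && (k <= j + l)%N.
  by apply/idP/idP; lia.
case: ifP => [/andP[/andP[_ lk] klj]|_]; last by rewrite !mulr0.
have -> : (n - k + i - (i - l) = n - k + l)%N by lia.
have -> : (i + j - k - (i - l) = j + l - k)%N by lia.
have -> : (m - k + j - (i + j - k) + (i - l) = m - l)%N by lia.
have -> : (i + j - (i + j - k) = k)%N by lia.
have -> : (i - (i - l) = l)%N by lia.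
have -> : (-1) ^+ i = (-1) ^+ (i - l) * (-1) ^+ l :> int by rewrite -exprD subnK.
rewrite mulrCA -!mulrA; congr (_ * _); rewrite mulrCA signrMK.
by rewrite -!natz -!natrM multinom_bin_dual.
Qed.

Theorem proposition8p3 (m n k i j : nat) :
  (k <= minn m n)%N -> (i <= m)%N -> (j <= n)%N ->
  (k <= i + j)%N -> (i + j <= m + n - k)%N ->
  (multinom (m - k) (n - k) k)%:Z
    * coordc (n - k + i) (m - k + j) (i + j - k) i j
  = (-1) ^+ i * (multinom (m - i) (n - j) (i + j - k))%:Z * coordc m n k i j.
Proof.
rewrite leq_min => /andP[km kn] im jn kij _.
rewrite !coordcE ?leq_addl ?leq_addr //; last by lia.
rewrite (reindex_inj rev_ord_inj) !mulr_sumr; apply: eq_bigr => l _ /=.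
by rewrite subSS coordc_term_dual // -ltnS.
Qed.
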